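(* Let $(\mathbb{F}_i)_{i\ge0}$ be a filtration on $\mathcal{E}$ with ranges $\mathcal{F}_i$. (1) If $(P_i)_{i\ge0}$ is a stopping time, then there is $\tau\in\mathcal{E}^s$ with $\tau(K)\subseteq\{1,2,\dots\}\cup\{\infty\}$ such that $\{\tau=n\}$ is clopen and $\mathbf{1}_{\{\tau=n\}}\in\mathcal{F}_n$ for every $n\ge1$, and $P_nf=\mathbf{1}_{\{\tau\le n\}}f$ for all $f\in\mathcal{E}$ and $n\ge0$. (2) Conversely, if $\tau\in\mathcal{E}^s$ satisfies $\tau(K)\subseteq\{1,2,\dots\}\cup\{\infty\}$ and $\mathbf{1}_{\{\tau=n\}}\in\mathcal{F}_n$ for all $n\ge1$, then the operators $P_0=0$ and $P_nf=\mathbf{1}_{\{\tau\le n\}}f$ ($f\in\mathcal{E}$, $n\ge1$) form a stopping time.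
   Context: Let $\mathcal{E}$ be an order complete vector lattice with a weak order unit $E$, $K$ its Stone space (extremally disconnected compact Hausdorff), and $C^\infty(K)$ the vector lattice and f-algebra of continuous functions $K\to[-\infty,\infty]$ finite off a nowhere dense set (identified when equal off a nowhere dense set; operations pointwise), the universal completion of $\mathcal{E}$. Fix a Maeda–Ogasawara representation of $\mathcal{E}$ as an order dense ideal of $C^\infty(K)$ with $E$ corresponding to $\mathbf{1}$; band projections on $\mathcal{E}$ are exactly multiplications by $\mathbf{1}_W$ for clopen $W\subseteq K$. The sup-completion is $\mathcal{E}^s=\{f\in C(K,[-\infty,\infty]): f\ge g\text{ for some } g\in\mathcal{E}\}$. A conditional expectation on $\mathcal{E}$ is an order continuous, strictly positive linear projection $\mathbb{F}:\mathcal{E}\to\mathcal{E}$ whose range is an order complete vector sublattice of $\mathcal{E}$ and with $\mathbb{F}E=E$. A filtration is a family $(\mathbb{F}_i)_{i\ge0}$ of conditional expectations with $\mathbb{F}_s=\mathbb{F}_s\mathbb{F}_t=\mathbb{F}_t\mathbb{F}_s$ for $s\le t$; $\mathcal{F}_i$ is the range of $\mathbb{F}_i$. A stopping time (for this filtration) is an increasing sequence $(P_i)_{i\ge0}$ of band projections on $\mathcal{E}$ with $P_0=0$ and $\mathbb{F}_jP_i=P_i\mathbb{F}_j$ whenever $i\le j$. *)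

From HB Require Import structures.
From mathcomp Require Import all_boot all_order all_algebra.
From mathcomp Require Import all_classical all_reals all_analysis.
Set Implicit Arguments. Unset Strict Implicit. Unset Printing Implicit Defensive.
Import Order.TTheory GRing.Theory Num.Theory.
Local Open Scope classical_set_scope.
Local Open Scope ring_scope.
Local Open Scope ereal_scope.

(* Functions K -> [-oo, +oo]; C^oo(K) is modelled by its continuous
   representatives (two continuous functions equal off a nowhere dense set
   are equal, so the identification is trivial). *)

Definition nowhere_dense {T : topologicalType} (A : set T) :=
  interior (closure A) = set0.

Definition extremally_disconnected (T : topologicalType) :=
  forall U : set T, open U -> open (closure U).

Definition stone_space (K : topologicalType) :=
  [/\ compact [set: K], hausdorff_space K & extremally_disconnected K].

Definition Cinf (R : realType) (K : topologicalType) : set (K -> \bar R) :=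
  [set f | continuous f /\ nowhere_dense [set x | f x \isn't a fin_num]].

(* h = a f + b g in C^oo(K): pointwise wherever f and g are finite
   (this determines the continuous h uniquely). *)
Definition is_lincomb (R : realType) (K : Type) (a : R) (f : K -> \bar R)
  (b : R) (g : K -> \bar R) (h : K -> \bar R) :=
  forall x, f x \is a fin_num -> g x \is a fin_num ->
    h x = a%:E * f x + b%:E * g x.

Definition fle (R : realType) (K : Type) (f g : K -> \bar R) :=
  forall x, f x <= g x.

Definition fzero (R : realType) (K : Type) : K -> \bar R := fun=> 0.
Definition fone (R : realType) (K : Type) : K -> \bar R := fun=> 1.

Definition order_dense_ideal (R : realType) (K : topologicalType)
  (E : set (K -> \bar R)) :=
  [/\ E `<=` @Cinf R K,
      (forall f g a b, E f -> E g -> exists2 h, E h & is_lincomb a f b g h),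
      (forall f g, E f -> @Cinf R K g -> (forall x, `|g x| <= `|f x|) -> E g),
      (forall g, @Cinf R K g -> fle (@fzero R K) g -> g <> @fzero R K ->
          exists2 f, E f & [/\ fle (@fzero R K) f, fle f g & f <> @fzero R K])
    & E (@fone R K)].

Definition is_inf (R : realType) (K : Type) (S D : set (K -> \bar R))
  (g : K -> \bar R) :=
  [/\ S g, (forall d, D d -> fle g d)
     & (forall h, S h -> (forall d, D d -> fle h d) -> fle h g)].

Definition is_sup (R : realType) (K : Type) (S D : set (K -> \bar R))
  (g : K -> \bar R) :=
  [/\ S g, (forall d, D d -> fle d g)
     & (forall h, S h -> (forall d, D d -> fle d h) -> fle g h)].

Definition order_continuous (R : realType) (K : Type) (E : set (K -> \bar R))
  (F : (K -> \bar R) -> (K -> \bar R)) :=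
  forall D : set (K -> \bar R), D `<=` E -> D !=set0 ->
    (forall d1 d2, D d1 -> D d2 -> exists2 d3, D d3 & fle d3 d1 /\ fle d3 d2) ->
    is_inf E D (@fzero R K) -> is_inf E (F @` D) (@fzero R K).

Definition linear_on (R : realType) (K : Type) (E : set (K -> \bar R))
  (F : (K -> \bar R) -> (K -> \bar R)) :=
  forall a b f g h, E f -> E g -> E h -> is_lincomb a f b g h ->
    is_lincomb a (F f) b (F g) (F h).

Definition strictly_positive (R : realType) (K : Type) (E : set (K -> \bar R))
  (F : (K -> \bar R) -> (K -> \bar R)) :=
  forall f, E f -> fle (@fzero R K) f -> f <> @fzero R K ->
    fle (@fzero R K) (F f) /\ F f <> @fzero R K.

Definition order_complete_sublattice (R : realType) (K : Type)
  (S : set (K -> \bar R)) :=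
  [/\ (forall f g a b, S f -> S g -> exists2 h, S h & is_lincomb a f b g h),
      (forall f g, S f -> S g -> S (fun x => maxe (f x) (g x)))
    & (forall A, A `<=` S -> A !=set0 ->
         (exists2 u, S u & forall d, A d -> fle d u) ->
         exists s, is_sup S A s)].

Definition cond_exp (R : realType) (K : Type) (E : set (K -> \bar R))
  (F : (K -> \bar R) -> (K -> \bar R)) :=
  [/\ (forall f, E f -> E (F f)),
      linear_on E F,
      (forall f, E f -> F (F f) = F f)
    & F (@fone R K) = @fone R K] /\
  [/\ order_continuous E F,
      strictly_positive E F
    & order_complete_sublattice (F @` E)].

Definition filtration (R : realType) (K : Type) (E : set (K -> \bar R))
  (F : nat -> (K -> \bar R) -> (K -> \bar R)) :=
  (forall i, cond_exp E (F i)) /\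
  (forall s t, (s <= t)%N -> forall f, E f ->
     F s f = F s (F t f) /\ F s f = F t (F s f)).

Definition mul_ind (R : realType) (K : Type) (W : set K) (f : K -> \bar R) :
  K -> \bar R := fun x => (\1_W x : R)%:E * f x.

Definition band_projection (R : realType) (K : topologicalType)
  (E : set (K -> \bar R)) (P : (K -> \bar R) -> (K -> \bar R)) :=
  exists2 W : set K, clopen W & forall f, E f -> P f = mul_ind W f.

Definition stopping_time (R : realType) (K : topologicalType)
  (E : set (K -> \bar R)) (F : nat -> (K -> \bar R) -> (K -> \bar R))
  (P : nat -> (K -> \bar R) -> (K -> \bar R)) :=
  [/\ (forall i, band_projection E (P i)),
      (forall i j, (i <= j)%N -> forall f, E f -> fle (@fzero R K) f ->
          fle (P i f) (P j f)),
      (forall f, E f -> P 0%N f = @fzero R K)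
    & (forall i j, (i <= j)%N -> forall f, E f -> F j (P i f) = P i (F j f))].

Definition sup_completion (R : realType) (K : topologicalType)
  (E : set (K -> \bar R)) : set (K -> \bar R) :=
  [set t | continuous t /\ exists2 g, E g & fle g t].

Definition nat_valued_time (R : realType) (K : Type) (tau : K -> \bar R) :=
  forall x, tau x = +oo \/ exists2 n : nat, (0 < n)%N & tau x = n%:R%:E.

Definition ind_fun (R : realType) (K : Type) (W : set K) : K -> \bar R :=
  fun x => (\1_W x : R)%:E.

From HB Require Import structures.
From mathcomp Require Import all_boot all_order all_algebra.
From mathcomp Require Import all_classical all_reals all_analysis.
From mathcomp Require Import lra.
Import Order.TTheory GRing.Theory Num.Theory.
Local Open Scope classical_set_scope.
Local Open Scope ring_scope.
Local Open Scope ereal_scope.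
Set Implicit Arguments. Unset Strict Implicit. Unset Printing Implicit Defensive.

(* A stopping time is an increasing sequence of band projections P_n = 1_{W_n}
   with W_0 empty, so the first entrance time tau(x) = min {n | x \in W_n} is a
   continuous natural-valued time with {tau <= n} = W_n and
   {tau = n} = W_n \ W_{n-1}.  Adaptedness of {tau = n} and, conversely, the
   commutation F_j (1_{tau <= i} f) = 1_{tau <= i} F_j f both reduce to the
   averaging property of a conditional expectation G: if G fixes 1_W for a
   clopen W, then G (1_W f) = 1_W G f.  For bounded f >= 0 this follows from
   positivity, since G (1_W f) <= c G 1_W vanishes off W; for f >= 0 the defect
   is dominated by G (f - f /\ n), which decreases to 0 by order continuity;
   the general case splits f = f^+ - f^-.  Identities between elements of E are
   checked pointwise on the open dense set where all functions involved are
   finite. *)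

Section OpenDense.
Variable T : topologicalType.

Definition open_dense (S : set T) := open S /\ dense S.

Lemma open_denseI (A B : set T) :
  open_dense A -> open_dense B -> open_dense (A `&` B).
Proof. by move=> [oA dA] [oB dB]; split; [exact: openI | exact: denseI]. Qed.

Lemma nowhere_dense_setC (A : set T) : nowhere_dense A -> dense (~` A).
Proof.
move=> nA O [x Ox] oO; apply: contrapT => nOA.
have : O `<=` interior (closure A).
  rewrite -open_subsetE // => y Oy; apply: subset_closure; apply: contrapT => nAy.
  by apply: nOA; exists y.
by rewrite nA => /(_ x Ox).
Qed.

Lemma nowhere_denseS (A B : set T) :
  nowhere_dense B -> A `<=` B -> nowhere_dense A.
Proof.
rewrite /nowhere_dense => nB AB; apply/seteqP; split => // x.
by move=> /(interiorS (closureS AB)); rewrite nB.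
Qed.

End OpenDense.

Section Indicator.
Variables (R : realType) (T : Type).
Implicit Types (f g h : T -> \bar R) (A B W : set T).

Lemma lincombE (a b : R) f g h x (r s : R) : is_lincomb a f b g h ->
  f x = r%:E -> g x = s%:E -> h x = (a * r + b * s)%:E.
Proof. by move=> hl fx gx; rewrite hl ?fx ?gx. Qed.

Lemma mul_indE W f x : mul_ind W f x = if x \in W then f x else 0.
Proof. by rewrite /mul_ind indicE; case: (x \in W); rewrite ?mul1e ?mul0e. Qed.

Lemma ind_funE W x : @ind_fun R T W x = if x \in W then 1 else 0.
Proof. by rewrite /ind_fun indicE; case: (x \in W). Qed.

Lemma mul_indT W f x : W x -> mul_ind W f x = f x.
Proof. by move=> Wx; rewrite mul_indE mem_set. Qed.

Lemma mul_indF W f x : ~ W x -> mul_ind W f x = 0.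
Proof. by move=> Wx; rewrite mul_indE; case: ifP => // /set_mem. Qed.

Lemma ind_funT W x : W x -> @ind_fun R T W x = 1.
Proof. by move=> Wx; rewrite ind_funE mem_set. Qed.

Lemma ind_funF W x : ~ W x -> @ind_fun R T W x = 0.
Proof. by move=> Wx; rewrite ind_funE; case: ifP => // /set_mem. Qed.

Lemma ind_fun_setT : @ind_fun R T setT = @fone R T.
Proof. by apply/funext => x; rewrite ind_funT. Qed.

Lemma is_lincomb_mul_ind (a b : R) W f g h : is_lincomb a f b g h ->
  is_lincomb a (mul_ind W f) b (mul_ind W g) (mul_ind W h).
Proof.
move=> hl x; rewrite !mul_indE; case: ifP => _; first exact: hl.
by rewrite !mule0 adde0.
Qed.

Lemma is_lincomb_funeposneg f : is_lincomb 1 f^\+ (-1) f^\- f.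
Proof. by move=> x _ _; rewrite mul1e mulN1e [in LHS](funeposneg f). Qed.

Lemma ind_fun_setD A B : A `<=` B ->
  is_lincomb 1 (@ind_fun R T B) (-1) (@ind_fun R T A) (@ind_fun R T (B `\` A)).
Proof.
move=> AB x _ _; rewrite mul1e mulN1e.
have [Ax|nAx] := pselect (A x).
  rewrite (@ind_funF (B `\` A) x); last by case.
  by rewrite !ind_funT ?subee //; exact: AB.
rewrite (@ind_funF A x) // oppe0 adde0.
have [Bx|nBx] := pselect (B x); first by rewrite !ind_funT.
by rewrite !ind_funF // => -[].
Qed.

Lemma ind_fun_setU A B : A `&` B = set0 ->
  is_lincomb 1 (@ind_fun R T A) 1 (@ind_fun R T B) (@ind_fun R T (A `|` B)).
Proof.
move=> AB0 x _ _; rewrite !mul1e.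
have [Ax|nAx] := pselect (A x).
  have nBx : ~ B x by move=> Bx; have : (A `&` B) x by []; rewrite AB0.
  by rewrite (@ind_funF B x) // !ind_funT ?adde0 //; left.
rewrite (@ind_funF A x) // add0e.
have [Bx|nBx] := pselect (B x); first by rewrite !ind_funT //; right.
by rewrite !ind_funF // => -[].
Qed.

End Indicator.

Section ExtendedRealContinuous.
Variables (R : realType) (T : topologicalType).
Implicit Types (f g h : T -> \bar R) (S W : set T).

Lemma ereal_lt_exists_EFin (a b : \bar R) : a < b -> exists c : R, a < c%:E < b.
Proof.
case: a => [a||]; case: b => [b||] //=.
- rewrite lte_fin => ab; exists ((a + b) / 2)%R.
  by rewrite !lte_fin; apply/andP; split; [rewrite midf_lt|rewrite midf_lt].
- by move=> _; exists (a + 1)%R; rewrite !lte_fin ltrDl ltr01 ltry.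
- by move=> _; exists (b - 1)%R; rewrite ltNye lte_fin gtrDl ltrN10.
- by move=> _; exists 0%R; rewrite ltNye ltry.
Qed.

Lemma continuous_le_dense S f g : continuous f -> continuous g -> dense S ->
  (forall x, S x -> f x <= g x) -> forall x, f x <= g x.
Proof.
move=> cf cg dS fg x; rewrite leNgt; apply/negP => gf.
have [c /andP[gc cf']] := ereal_lt_exists_EFin gf.
have oU : open (f @^-1` [set y | c%:E < y] `&` g @^-1` [set y | y < c%:E]).
  apply: openI.
  - by move/continuousP : cf; apply; exact: open_ereal_gt_ereal.
  - by move/continuousP : cg; apply; exact: open_ereal_lt_ereal.
have [y [[/= cfy gcy] Sy]] := dS _ (ex_intro _ x (conj cf' gc)) oU.
by have := fg y Sy; rewrite leNgt (lt_trans gcy cfy).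
Qed.

Lemma continuous_eq_dense S f g : continuous f -> continuous g -> dense S ->
  (forall x, S x -> f x = g x) -> f = g.
Proof.
move=> cf cg dS fg; apply/funext => x; apply/eqP; rewrite eq_le.
by rewrite (continuous_le_dense cf cg dS) ?(continuous_le_dense cg cf dS) // => y /fg ->.
Qed.

Lemma open_fin_num f : continuous f -> open [set x | f x \is a fin_num].
Proof.
move=> cf.
rewrite (_ : [set x | _] = f @^-1` ([set y | -oo < y] `&` [set y | y < +oo])).
  move/continuousP : cf; apply; apply: openI.
  - exact: open_ereal_gt_ereal.
  - exact: open_ereal_lt_ereal.
by apply/seteqP; split => x /=; rewrite fin_numE ltNye ltey; [move/andP | case=> -> ->].
Qed.

Lemma open_cst (P : Prop) : open [set _ : T | P].
Proof.
have [p|np] := pselect P.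
  suff -> : [set _ : T | P] = setT by exact: openT.
  by apply/seteqP; split.
suff -> : [set _ : T | P] = set0 by exact: open0.
by apply/seteqP; split.
Qed.

Lemma mul_ind_continuous W f : clopen W -> continuous f -> continuous (mul_ind W f).
Proof.
move=> [oW cW] cf; apply/continuousP => A oA.
rewrite (_ : _ @^-1` A = (W `&` f @^-1` A) `|` (~` W `&` [set _ | A 0])).
  apply: openU; apply: openI => //.
  - by move/continuousP : cf; apply.
  - exact: closed_openC.
  - exact: open_cst.
apply/seteqP; split => x /=; rewrite mul_indE.
  case: ifPn => [/set_mem xW Afx|xW A0]; [by left|right]; split => //.
  by move=> /mem_set; apply/negP.
move=> [[xW Afx]|[nxW A0]]; first by rewrite mem_set.
by rewrite ifF //; apply/negbTE/negP => /set_mem.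
Qed.

End ExtendedRealContinuous.

Section Cinf.
Variables (R : realType) (K : topologicalType).
Implicit Types (f g : K -> \bar R) (W : set K).

Lemma Cinf_continuous_fin f g : continuous g -> Cinf f ->
  (forall x, f x \is a fin_num -> g x \is a fin_num) -> Cinf g.
Proof.
move=> cg [_ nf] fg; split => //; apply: (nowhere_denseS nf) => x /=.
by apply: contra; exact: fg.
Qed.

Lemma Cinf_fin_num f : Cinf f -> open_dense [set x | f x \is a fin_num].
Proof.
move=> [cf nf]; split; first exact: open_fin_num.
rewrite (_ : [set x | _] = ~` [set x | f x \isn't a fin_num]).
  exact: nowhere_dense_setC.
by apply/seteqP; split => x /=; [move=> -> | move/negP; rewrite negbK].
Qed.

Lemma Cinf_cst (c : \bar R) : c \is a fin_num -> @Cinf R K (fun=> c).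
Proof.
move=> fc; split; first exact: cst_continuous.
rewrite /nowhere_dense (_ : [set _ | _] = set0) ?closure0 ?interior0 //.
by apply/seteqP; split => x //=; rewrite fc.
Qed.

Lemma Cinf_mul_ind W f : clopen W -> Cinf f -> Cinf (mul_ind W f).
Proof.
move=> cW Cf; apply: (Cinf_continuous_fin _ Cf).
  by apply: mul_ind_continuous cW _; case: Cf.
by move=> x fx; rewrite mul_indE; case: ifP.
Qed.

Lemma Cinf_ind_fun W : clopen W -> Cinf (@ind_fun R K W).
Proof.
move=> cW; have -> : @ind_fun R K W = mul_ind W (fun=> 1).
  by apply/funext => x; rewrite ind_funE mul_indE.
exact/Cinf_mul_ind/Cinf_cst.
Qed.

Lemma Cinf_min f (c : R) : Cinf f -> Cinf (fun x => mine (f x) c%:E).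
Proof.
move=> Cf; apply: (Cinf_continuous_fin _ Cf).
  by apply: min_fun_continuous; [case: Cf | exact: cst_continuous].
by move=> x fx; rewrite /mine; case: ifP.
Qed.

Lemma Cinf_funepos f : Cinf f -> Cinf f^\+.
Proof.
move=> Cf; apply: (Cinf_continuous_fin _ Cf).
  have -> : f^\+ = f \max (fun=> 0) by apply/funext => x; rewrite funeposE.
  by apply: max_fun_continuous; [case: Cf | exact: cst_continuous].
by move=> x fx; rewrite funeposE /maxe; case: ifP.
Qed.

Lemma Cinf_funeneg f : Cinf f -> Cinf f^\-.
Proof.
move=> Cf; apply: (Cinf_continuous_fin _ Cf); last first.
  by move=> x fx; rewrite funenegE /maxe; case: ifP; rewrite ?fin_numN.
have -> : f^\- = (fun x => - f x) \max (fun=> 0).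
  by apply/funext => x; rewrite funenegE.
apply: max_fun_continuous; last exact: cst_continuous.
by case: Cf => cf _ x; exact: (continuous_comp (cf x) (@oppe_continuous R _)).
Qed.

Lemma Cinf_abse f : Cinf f -> Cinf (fun x => `|f x|).
Proof.
move=> Cf; apply: (Cinf_continuous_fin _ Cf); last by move=> x; rewrite abse_fin_num.
by case: Cf => cf _ x; exact: (continuous_comp (cf x) (@abse_continuous R _)).
Qed.

End Cinf.

Section OrderDenseIdeal.
Variables (R : realType) (K : topologicalType) (E : set (K -> \bar R)).
Hypothesis hE : order_dense_ideal E.
Implicit Types (f g h u : K -> \bar R) (W : set K).

Lemma E_Cinf f : E f -> Cinf f.
Proof. by case: hE => + _ _ _ _; apply. Qed.

Lemma E_continuous f : E f -> continuous f.
Proof. by move=> /E_Cinf []. Qed.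

Lemma E_fin_num f : E f -> open_dense [set x | f x \is a fin_num].
Proof. by move=> /E_Cinf/Cinf_fin_num. Qed.

Lemma E_dominated f g : E f -> Cinf g -> (forall x, `|g x| <= `|f x|) -> E g.
Proof. by case: hE => _ _ + _ _; apply. Qed.

Lemma E_fone : E (@fone R K).
Proof. by case: hE. Qed.

Lemma E_lincomb a b f g : E f -> E g -> exists2 h, E h & is_lincomb a f b g h.
Proof. by case: hE => _ + _ _ _; apply. Qed.

Lemma E_fzero : E (@fzero R K).
Proof.
apply: (E_dominated E_fone); first exact: Cinf_cst.
by move=> x; rewrite /fzero abse0 abse_ge0.
Qed.

Lemma E_ind_fun W : clopen W -> E (@ind_fun R K W).
Proof.
move=> cW; apply: (E_dominated E_fone); first exact: Cinf_ind_fun.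
by move=> x; rewrite ind_funE /fone; case: ifP; rewrite ?abse0 ?abse1.
Qed.

Lemma E_mul_ind W f : clopen W -> E f -> E (mul_ind W f).
Proof.
move=> cW Ef; apply: (E_dominated Ef); first exact/Cinf_mul_ind/E_Cinf.
by move=> x; rewrite mul_indE; case: ifP; rewrite ?abse0 ?abse_ge0.
Qed.

Lemma E_min f (c : R) : E f -> (forall x, 0 <= f x) -> (0 <= c)%R ->
  E (fun x => mine (f x) c%:E).
Proof.
move=> Ef f0 c0; apply: (E_dominated Ef); first exact/Cinf_min/E_Cinf.
by move=> x; rewrite !gee0_abs ?le_min ?f0 ?lee_fin // ge_min lexx.
Qed.

Lemma E_funepos f : E f -> E f^\+.
Proof.
move=> Ef; apply: (E_dominated Ef); first exact/Cinf_funepos/E_Cinf.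
move=> x; rewrite gee0_abs ?funepos_ge0 // -[leRHS]/((abse \o f) x) fune_abse.
exact/leeDl/funeneg_ge0.
Qed.

Lemma E_funeneg f : E f -> E f^\-.
Proof.
move=> Ef; apply: (E_dominated Ef); first exact/Cinf_funeneg/E_Cinf.
move=> x; rewrite gee0_abs ?funeneg_ge0 // -[leRHS]/((abse \o f) x) fune_abse.
exact/leeDr/funepos_ge0.
Qed.

Lemma E_abse f : E f -> E (fun x => `|f x|).
Proof.
by move=> Ef; apply: (E_dominated Ef); [exact/Cinf_abse/E_Cinf | move=> x; rewrite abse_id].
Qed.

Lemma E_lincomb_unique a b f g h1 h2 : E f -> E g ->
  continuous h1 -> continuous h2 ->
  is_lincomb a f b g h1 -> is_lincomb a f b g h2 -> h1 = h2.
Proof.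
move=> Ef Eg c1 c2 l1 l2.
apply: (continuous_eq_dense c1 c2 (open_denseI (E_fin_num Ef) (E_fin_num Eg)).2).
by move=> x [fx gx]; rewrite l1 // l2.
Qed.

Lemma E_lincomb_continuous a b f g u : E f -> E g -> continuous u ->
  is_lincomb a f b g u -> E u.
Proof.
move=> Ef Eg cu ul; have [h Eh hl] := E_lincomb a b Ef Eg.
by rewrite -(E_lincomb_unique Ef Eg (E_continuous Eh) cu hl ul).
Qed.

Lemma E_trunc_tail (f : K -> \bar R) : E f -> (forall x, 0 <= f x) ->
  exists g : nat -> K -> \bar R,
  [/\ forall n, E (g n),
      forall n, is_lincomb 1 f (-1) (fun x => mine (f x) n%:R%:E) (g n),
      (forall d1 d2, range g d1 -> range g d2 ->
         exists2 d3, range g d3 & fle d3 d1 /\ fle d3 d2)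
    & is_inf E (range g) (@fzero R K)].
Proof.
move=> Ef f0; pose fn n x := mine (f x) n%:R%:E.
have Efn n : E (fn n) by apply: (E_min Ef f0); rewrite ler0n.
have gex n : exists h, E h /\ is_lincomb 1 f (-1) (fn n) h.
  by have [h ? ?] := E_lincomb 1 (-1) Ef (Efn n); exists h.
have [g gP] := choice gex.
have Eg n := (gP n).1; have gl n := (gP n).2.
have ffin := (E_fin_num Ef).2.
have gE n x r : f x = r%:E -> g n x = (r - Num.min r n%:R)%:E.
  move=> fx; have fnx : fn n x = (Num.min r n%:R)%:E by rewrite /fn fx EFin_min.
  by rewrite (lincombE (gl n) fx fnx) mul1r mulN1r.
have g0 n x : 0 <= g n x.
  apply: (continuous_le_dense (@cst_continuous _ _ _) (E_continuous (Eg n)) ffin) => {}x.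
  by move=> /fineK fx; rewrite (gE n x _ (esym fx)) lee_fin subr_ge0 ge_min lexx.
have gdec n m x : (n <= m)%N -> g m x <= g n x.
  move=> nm; apply: (continuous_le_dense (E_continuous (Eg m)) (E_continuous (Eg n)) ffin) => {}x.
  move=> /fineK fx; rewrite (gE n x _ (esym fx)) (gE m x _ (esym fx)) lee_fin lerD2l lerN2.
  by apply: le_min2 => //; rewrite ler_nat.
exists g; split => //.
  move=> _ _ [n _ <-] [m _ <-]; exists (g (maxn n m)); first by exists (maxn n m).
  by split => x; apply: gdec; rewrite ?leq_maxl ?leq_maxr.
split; [exact: E_fzero | by move=> _ [n _ <-] x; exact: g0 |].
move=> h Eh hg; apply: (continuous_le_dense (E_continuous Eh) (@cst_continuous _ _ _) ffin).
move=> x /fineK fx; set r := fine (f x) in fx.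
have r0 : (0 <= r)%R by rewrite -lee_fin fx.
have := hg _ (ex_intro2 _ _ (Num.truncn r).+1 I erefl) x.
by rewrite (gE _ x _ (esym fx)) min_l ?subrr // ltW // truncnS_gt.
Qed.

End OrderDenseIdeal.

Section ConditionalExpectation.
Variables (R : realType) (K : topologicalType) (E : set (K -> \bar R)).
Hypothesis hE : order_dense_ideal E.
Variable G : (K -> \bar R) -> (K -> \bar R).
Hypothesis hG : cond_exp E G.
Implicit Types (f g h u v : K -> \bar R) (V W : set K).

Lemma cond_exp_E f : E f -> E (G f).
Proof. by case: hG => -[+ _ _ _] _; apply. Qed.

Lemma cond_exp_lincomb a b f g h : E f -> E g -> E h -> is_lincomb a f b g h ->
  is_lincomb a (G f) b (G g) (G h).
Proof. by case: hG => -[_ + _ _] _; apply. Qed.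

Lemma cond_exp_fone : G (@fone R K) = @fone R K.
Proof. by case: hG => -[]. Qed.

Lemma cond_exp_continuous f : E f -> continuous (G f).
Proof. by move=> /cond_exp_E /(E_continuous hE). Qed.

Lemma cond_exp_fixed_lincomb a b u v h : E u -> E v -> E h ->
  G u = u -> G v = v -> is_lincomb a u b v h -> G h = h.
Proof.
move=> Eu Ev Eh Gu Gv hl; have := cond_exp_lincomb Eu Ev Eh hl; rewrite Gu Gv => Ghl.
exact: (E_lincomb_unique hE Eu Ev (cond_exp_continuous Eh) (E_continuous hE Eh) Ghl hl).
Qed.

Lemma cond_exp_fzero : G (@fzero R K) = @fzero R K.
Proof.
have E0 := E_fzero hE; have EG0 := cond_exp_E E0.
have l0 : is_lincomb 0 (@fzero R K) 0 (@fzero R K) (@fzero R K).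
  by move=> x _ _; rewrite !mul0e adde0.
have hl := cond_exp_lincomb E0 E0 E0 l0.
apply: (E_lincomb_unique hE EG0 EG0 (E_continuous hE EG0) (@cst_continuous _ _ _) hl).
by move=> x _ _; rewrite !mul0e adde0.
Qed.

Lemma cond_exp_ge0 f : E f -> (forall x, 0 <= f x) -> forall x, 0 <= G f x.
Proof.
move=> Ef f0; have [->|nf0] := pselect (f = @fzero R K).
  by rewrite cond_exp_fzero.
by case: hG => _ [_ + _] => /(_ f Ef f0 nf0) [].
Qed.

Lemma cond_exp_le u v : E u -> E v -> (forall x, u x <= v x) ->
  forall x, G u x <= G v x.
Proof.
move=> Eu Ev uv; have [h Eh hl] := E_lincomb hE 1%R (-1)%R Ev Eu.
have dvu := open_denseI (E_fin_num hE Ev) (E_fin_num hE Eu).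
have h0 : forall x, 0 <= h x.
  apply: (continuous_le_dense (@cst_continuous _ _ _) (E_continuous hE Eh) dvu.2).
  move=> x [/fineK vx /fineK ux]; rewrite (lincombE hl (esym vx) (esym ux)).
  by rewrite lee_fin mul1r mulN1r subr_ge0 -lee_fin vx ux.
have dGvu := open_denseI (E_fin_num hE (cond_exp_E Ev)) (E_fin_num hE (cond_exp_E Eu)).
apply: (continuous_le_dense (cond_exp_continuous Eu) (cond_exp_continuous Ev) dGvu.2).
move=> x [/fineK vx /fineK ux]; have := cond_exp_ge0 Eh h0 x.
rewrite (lincombE (cond_exp_lincomb Ev Eu Eh hl) (esym vx) (esym ux)).
by rewrite lee_fin mul1r mulN1r subr_ge0 -lee_fin vx ux.
Qed.

Lemma cond_exp_ind_funC W : clopen W -> G (@ind_fun R K W) = @ind_fun R K W ->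
  G (@ind_fun R K (~` W)) = @ind_fun R K (~` W).
Proof.
move=> cW GW; have E1 : E (@ind_fun R K setT) by rewrite ind_fun_setT; exact: E_fone.
apply: (cond_exp_fixed_lincomb E1 (E_ind_fun hE cW) (E_ind_fun hE (clopenC W cW)) _ GW).
- by rewrite ind_fun_setT cond_exp_fone.
- by rewrite -setTD; exact: ind_fun_setD.
Qed.

Lemma cond_exp_mul_ind_cst V (c : R) : clopen V ->
  G (@ind_fun R K V) = @ind_fun R K V ->
  E (mul_ind V (fun=> c%:E)) /\ G (mul_ind V (fun=> c%:E)) = mul_ind V (fun=> c%:E).
Proof.
move=> cV GV; have EV := E_ind_fun hE cV.
have hl : is_lincomb c (@ind_fun R K V) 0 (@ind_fun R K V) (mul_ind V (fun=> c%:E)).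
  by move=> x _ _; rewrite mul_indE ind_funE mul0e adde0; case: ifP; rewrite ?mule1 ?mule0.
have EVc := E_lincomb_continuous hE EV EV (mul_ind_continuous cV (@cst_continuous _ _ _)) hl.
by split => //; exact: (cond_exp_fixed_lincomb EV EV EVc GV GV hl).
Qed.

Lemma cond_exp_mul_ind_outside V (c : R) f : clopen V ->
  G (@ind_fun R K V) = @ind_fun R K V -> E f ->
  (forall x, 0 <= f x) -> (forall x, f x <= c%:E) ->
  forall x, ~ V x -> G (mul_ind V f) x = 0.
Proof.
move=> cV GV Ef f0 fc x nVx; have EVf := E_mul_ind hE cV Ef.
have [EVc GVc] := cond_exp_mul_ind_cst c cV GV.
apply/eqP; rewrite eq_le; apply/andP; split.
  have le_c y : mul_ind V f y <= mul_ind V (fun=> c%:E) y.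
    by rewrite !mul_indE; case: ifP.
  by have := cond_exp_le EVf EVc le_c x; rewrite GVc mul_indF.
by apply: (cond_exp_ge0 EVf) => y; rewrite mul_indE; case: ifP.
Qed.

Lemma cond_exp_mul_ind_bounded W (c : R) f : clopen W ->
  G (@ind_fun R K W) = @ind_fun R K W -> E f ->
  (forall x, 0 <= f x) -> (forall x, f x <= c%:E) ->
  G (mul_ind W f) = mul_ind W (G f).
Proof.
move=> cW GW Ef f0 fc.
have cWc := clopenC W cW; have GWc := cond_exp_ind_funC cW GW.
have EWf := E_mul_ind hE cW Ef; have EWcf := E_mul_ind hE cWc Ef.
have hl : is_lincomb 1 (mul_ind W f) 1 (mul_ind (~` W) f) f.
  by move=> x _ _; rewrite !mul_indE in_setC; case: (x \in W); rewrite /= ?mul1e ?adde0 ?add0e.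
have Ghl := cond_exp_lincomb EWf EWcf Ef hl.
have D := open_denseI (E_fin_num hE (cond_exp_E EWf)) (E_fin_num hE (cond_exp_E EWcf)).
apply: (continuous_eq_dense (cond_exp_continuous EWf)
  (mul_ind_continuous cW (cond_exp_continuous Ef)) D.2) => x [/= Wfx Wcfx].
have [Wx|nWx] := pselect (W x); last first.
  by rewrite mul_indF //; exact: (cond_exp_mul_ind_outside cW GW Ef f0 fc).
rewrite mul_indT // Ghl // (cond_exp_mul_ind_outside cWc GWc Ef f0 fc) ?mul1e ?adde0 //.
Qed.

Lemma cond_exp_mul_ind_defect W f (n : nat) g d : clopen W ->
  G (@ind_fun R K W) = @ind_fun R K W -> E f -> (forall x, 0 <= f x) ->
  E g -> is_lincomb 1 f (-1) (fun x => mine (f x) n%:R%:E) g -> (forall x, 0 <= g x) ->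
  E d -> is_lincomb 1 (mul_ind W (G f)) (-1) (G (mul_ind W f)) d ->
  forall x, `|d x| <= G g x.
Proof.
(* By the bounded case for f /\ n, d = 1_W G g - G (1_W g), and 0 <= G (1_W g) <= G g. *)
move=> cW GW Ef f0 Eg gl g0 Ed dl; set fn := fun x => mine (f x) n%:R%:E.
have Efn : E fn by apply: (E_min hE Ef f0); rewrite ler0n.
have EWf := E_mul_ind hE cW Ef; have EWg := E_mul_ind hE cW Eg.
have Ggl := cond_exp_lincomb Ef Efn Eg gl.
have GWgl := cond_exp_lincomb EWf (E_mul_ind hE cW Efn) EWg (is_lincomb_mul_ind (W := W) gl).
rewrite (@cond_exp_mul_ind_bounded W n%:R fn) // in GWgl; last 2 first.
- by move=> x; rewrite /fn le_min f0 lee_fin ler0n.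
- by move=> x; rewrite /fn ge_min lexx orbT.
have Wg0 x : 0 <= mul_ind W g x by rewrite mul_indE; case: ifP.
have GWg_ge0 := cond_exp_ge0 EWg Wg0.
have GWg_le x : G (mul_ind W g) x <= G g x.
  by apply: (cond_exp_le EWg Eg) => y; rewrite mul_indE; case: ifP.
have D := open_denseI (open_denseI (E_fin_num hE (cond_exp_E Ef))
  (E_fin_num hE (cond_exp_E Efn))) (E_fin_num hE (cond_exp_E EWf)).
apply: (continuous_le_dense (E_continuous hE (E_abse hE Ed))
  (cond_exp_continuous Eg) D.2) => x [[/fineK Gfx /fineK Gfnx] /fineK GWfx].
move: (GWg_ge0 x) (GWg_le x); rewrite (lincombE Ggl (esym Gfx) (esym Gfnx)).
have [Wx|nWx] := pselect (W x).
- rewrite (lincombE GWgl (esym GWfx) (etrans (mul_indT _ Wx) (esym Gfnx))).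
  rewrite (lincombE dl (etrans (mul_indT _ Wx) (esym Gfx)) (esym GWfx)).
  by rewrite abse_EFin !lee_fin ler_norml => ? ?; apply/andP; split; lra.
- rewrite (lincombE GWgl (esym GWfx) (mul_indF _ nWx : _ = 0%:E)).
  rewrite (lincombE dl (mul_indF _ nWx : _ = 0%:E) (esym GWfx)).
  by rewrite abse_EFin !lee_fin ler_norml => ? ?; apply/andP; split; lra.
Qed.

Lemma cond_exp_mul_ind_ge0 W f : clopen W ->
  G (@ind_fun R K W) = @ind_fun R K W -> E f -> (forall x, 0 <= f x) ->
  G (mul_ind W f) = mul_ind W (G f).
Proof.
move=> cW GW Ef f0; have [g [Eg gl gdir ginf]] := E_trunc_tail hE Ef f0.
have g0 n x : 0 <= g n x by case: ginf => _ + _; apply; exists n.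
have EWf := E_mul_ind hE cW Ef; have EWGf := E_mul_ind hE cW (cond_exp_E Ef).
have [d Ed dl] := E_lincomb hE 1 (-1) EWGf (cond_exp_E EWf).
have d0 x : `|d x| <= 0.
  (* order continuity of G along the tails g n, which decrease to 0 *)
  have [_ _ GDinf] : is_inf E (G @` range g) (@fzero R K).
    case: hG => _ [+ _ _]; apply => //; last by exists (g 0%N), 0%N.
    by move=> _ [n _ <-].
  apply: (GDinf _ (E_abse hE Ed)) => _ [_ [n _ <-] <-] {}x.
  exact: (cond_exp_mul_ind_defect cW GW Ef f0 (Eg n) (gl n) (g0 n) Ed dl).
have D := open_denseI (E_fin_num hE (cond_exp_E EWf)) (E_fin_num hE EWGf).
apply: (continuous_eq_dense (cond_exp_continuous EWf) (E_continuous hE EWGf) D.2).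
move=> x [/fineK GWfx /fineK WGfx]; move: (d0 x).
rewrite (lincombE dl (esym WGfx) (esym GWfx)) abse_EFin lee_fin normr_le0 => /eqP e.
by rewrite -GWfx -WGfx; congr EFin; lra.
Qed.

Lemma cond_exp_mul_ind W f : clopen W -> G (@ind_fun R K W) = @ind_fun R K W ->
  E f -> G (mul_ind W f) = mul_ind W (G f).
Proof.
move=> cW GW Ef; have Efp := E_funepos hE Ef; have Efn := E_funeneg hE Ef.
have hl := @is_lincomb_funeposneg R K f.
have GWhl := cond_exp_lincomb (E_mul_ind hE cW Efp) (E_mul_ind hE cW Efn)
  (E_mul_ind hE cW Ef) (is_lincomb_mul_ind (W := W) hl).
rewrite (cond_exp_mul_ind_ge0 cW GW Efp (funepos_ge0 f)) in GWhl.
rewrite (cond_exp_mul_ind_ge0 cW GW Efn (funeneg_ge0 f)) in GWhl.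
apply: (E_lincomb_unique hE (E_mul_ind hE cW (cond_exp_E Efp))
  (E_mul_ind hE cW (cond_exp_E Efn)) (cond_exp_continuous (E_mul_ind hE cW Ef))
  (mul_ind_continuous cW (cond_exp_continuous Ef)) GWhl).
exact/is_lincomb_mul_ind/(cond_exp_lincomb Efp Efn Ef hl).
Qed.

End ConditionalExpectation.

Section FirstTime.
Variables (R : realType) (K : topologicalType) (W : nat -> set K).
Hypothesis W_mono : forall i j, (i <= j)%N -> W i `<=` W j.
Hypothesis W0 : W 0%N = set0.

Definition first_time (x : K) : \bar R :=
  match pselect (exists n, `[< W n x >]) with
  | left h => (ex_minn h)%:R%:E
  | right _ => +oo
  end.

Lemma first_time_le n x : first_time x <= n%:R%:E <-> W n x.
Proof.
rewrite /first_time; case: pselect => [h|nh].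
  case: ex_minnP => m /asboolP Wm minm; rewrite lee_fin ler_nat; split.
    by move=> mn; apply: W_mono mn _ Wm.
  by move=> Wn; apply: minm; apply/asboolP.
split; first by rewrite leye_eq.
by move=> Wn; exfalso; apply: nh; exists n; apply/asboolP.
Qed.

Lemma nat_valued_first_time : nat_valued_time first_time.
Proof.
move=> x; rewrite /first_time; case: pselect => [h|nh]; last by left.
right; case: ex_minnP => m /asboolP Wm _; exists m => //.
by rewrite lt0n; apply: contraPneq Wm => ->; rewrite W0.
Qed.

Lemma first_time_eq n x : (1 <= n)%N ->
  first_time x = n%:R%:E <-> W n x /\ ~ W n.-1 x.
Proof.
move=> n1; rewrite -!first_time_le; split.
  by move=> ->; rewrite !lee_fin !ler_nat; case: n n1 => //= n _; rewrite leqnn ltnn.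
case: (nat_valued_first_time x) => [->|[m _ ->]]; first by rewrite leye_eq => -[].
rewrite !lee_fin !ler_nat => -[mn /negP]; rewrite -ltnNge prednK // => nm.
by congr (_%:R%:E); apply/eqP; rewrite eqn_leq mn.
Qed.

Lemma continuous_first_time : (forall n, clopen (W n)) -> continuous first_time.
Proof.
move=> cW x A /= nA; suff Hs : nbhs x (first_time @^-1` A) by exact: Hs.
case: (nat_valued_first_time x) => [e|[m m0 e]].
  rewrite e in nA; case: nA => M [_ hM].
  pose n := (Num.truncn M).+1.
  have Mn : (M < n%:R)%R by exact: truncnS_gt.
  apply: (filterS (P := ~` W n)); last first.
    apply: open_nbhs_nbhs; split; first by apply: closed_openC; case: (cW n).
    by move=> /first_time_le; rewrite e leye_eq.
  move=> y /= nWy; apply: hM; rewrite (lt_le_trans (y := n%:R%:E)) ?lte_fin //.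
  by rewrite leNgt; apply/negP => /ltW /first_time_le.
have Ax : A (first_time x) by apply: nbhs_singleton.
apply: (filterS (P := W m `&` ~` W m.-1)); last first.
  apply: open_nbhs_nbhs; split; last exact/first_time_eq.
  by apply: openI; [case: (cW m) | apply: closed_openC; case: (cW m.-1)].
by move=> y /= /(first_time_eq _ m0); rewrite -e => ->.
Qed.

End FirstTime.

Section NatValuedTime.
Variables (R : realType) (K : topologicalType) (tau : K -> \bar R).
Hypothesis tau_nat : nat_valued_time tau.

Lemma time_le0 : [set x | tau x <= 0%:R%:E] = set0.
Proof.
apply/seteqP; split => // x /=; case: (tau_nat x) => [->|[m m0 ->]] //.
by rewrite lee_fin ler_nat leqn0 => /eqP m00; rewrite m00 in m0.
Qed.

Lemma time_leS n : [set x | tau x <= n.+1%:R%:E] =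
  [set x | tau x <= n%:R%:E] `|` [set x | tau x = n.+1%:R%:E].
Proof.
apply/seteqP; split => x /=; case: (tau_nat x) => [->|[m _ ->]];
  rewrite ?leye_eq ?lee_fin ?ler_nat //.
- by rewrite leq_eqVlt ltnS => /orP[/eqP ->|]; [right | left].
- by case.
- move=> [mn|e]; first exact: leqW.
  by move: e => [/eqP]; rewrite eqr_nat => /eqP ->.
Qed.

Lemma time_le_disjoint n :
  [set x | tau x <= n%:R%:E] `&` [set x | tau x = n.+1%:R%:E] = set0.
Proof.
apply/seteqP; split => // x [/= + e]; rewrite e lee_fin ler_nat.
by rewrite ltnn.
Qed.

Lemma clopen_time_le n : continuous tau -> clopen [set x | tau x <= n%:R%:E].
Proof.
move=> ct; split.
  rewrite (_ : [set x | _] = tau @^-1` [set y | y < (n.+1%:R)%:E]).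
    by move/continuousP : ct; apply; exact: open_ereal_lt_ereal.
  apply/seteqP; split => x /=; case: (tau_nat x) => [->|[m _ ->]] //;
  by rewrite !lee_fin !lte_fin ?ler_nat ?ltr_nat ltnS.
rewrite -openC (_ : ~` _ = tau @^-1` [set y | n%:R%:E < y]).
  by move/continuousP : ct; apply; exact: open_ereal_gt_ereal.
by apply/seteqP; split => x /=; rewrite ltNge => /negP.
Qed.

End NatValuedTime.

Section Filtration.
Variables (R : realType) (K : topologicalType) (E : set (K -> \bar R))
  (F : nat -> (K -> \bar R) -> (K -> \bar R)).
Hypothesis hF : filtration E F.

Lemma filtration_cond_exp n : cond_exp E (F n).
Proof. by case: hF. Qed.

Lemma filtration_fixed m n u : (m <= n)%N -> (F m @` E) u -> F n u = u.
Proof. by move=> mn [g Eg <-]; have [_ <-] := hF.2 _ _ mn g Eg. Qed.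

End Filtration.

Section TimeToStoppingTime.
Variables (R : realType) (K : topologicalType) (E : set (K -> \bar R))
  (F : nat -> (K -> \bar R) -> (K -> \bar R)) (tau : K -> \bar R).
Hypotheses (hE : order_dense_ideal E) (hF : filtration E F).
Hypotheses (tau_sup : sup_completion E tau) (tau_nat : nat_valued_time tau).
Hypothesis tau_adapted : forall n : nat, (1 <= n)%N ->
  (F n @` E) (@ind_fun R K [set x | tau x = n%:R%:E]).

Let clopen_le n : clopen [set x | tau x <= n%:R%:E].
Proof. by apply: clopen_time_le => //; case: tau_sup. Qed.

Lemma filtration_fixes_time_le i j : (i <= j)%N ->
  F j (@ind_fun R K [set x | tau x <= i%:R%:E]) = @ind_fun R K [set x | tau x <= i%:R%:E].
Proof.
have hFj := filtration_cond_exp hF j.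
elim: i => [_|i IH ij].
  rewrite time_le0 // (_ : ind_fun _ _ = @fzero R K); last first.
    by apply/funext => x; rewrite ind_funF.
  exact: (cond_exp_fzero hE hFj).
have [g Eg Fg] := tau_adapted (ltn0Sn i).
have Eeq : E (@ind_fun R K [set x | tau x = i.+1%:R%:E]).
  by rewrite -Fg; exact: (cond_exp_E (filtration_cond_exp hF i.+1) Eg).
have Feq := filtration_fixed hF ij (ex_intro2 _ _ g Eg Fg).
rewrite time_leS //; apply: (cond_exp_fixed_lincomb hE hFj _ Eeq _ (IH (ltnW ij)) Feq).
- exact: E_ind_fun.
- by rewrite -time_leS //; exact: E_ind_fun.
- exact/ind_fun_setU/time_le_disjoint.
Qed.

Lemma stopping_time_of_time : stopping_time E F
  (fun n f => if n is 0%N then @fzero R K else mul_ind [set x | tau x <= n%:R%:E] f).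
Proof.
split.
- case=> [|n].
    exists set0; first exact: clopen0.
    by move=> f _; apply/funext => x; rewrite mul_indF.
  by exists [set x | tau x <= n.+1%:R%:E].
- move=> [|i] [|j] //= ij f Ef f0 x.
  + exact: lexx.
  + by rewrite mul_indE; case: ifP => // _; exact: f0.
  + rewrite !mul_indE; case: ifPn => [/set_mem xi|_]; last by case: ifP => // _; exact: f0.
    by rewrite mem_set //; apply: (le_trans xi); rewrite lee_fin ler_nat.
- by [].
- move=> [|i] j ij f Ef /=; first exact: (cond_exp_fzero hE (filtration_cond_exp hF j)).
  apply: (cond_exp_mul_ind hE (filtration_cond_exp hF j) (clopen_le i.+1)) => //.
  exact: filtration_fixes_time_le.
Qed.

End TimeToStoppingTime.

Section StoppingTimeToTime.
Variables (R : realType) (K : topologicalType) (E : set (K -> \bar R))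
  (F P : nat -> (K -> \bar R) -> (K -> \bar R)).
Hypotheses (hE : order_dense_ideal E) (hF : filtration E F) (hP : stopping_time E F P).

Lemma stopping_time_sets : exists W : nat -> set K,
  [/\ forall n, clopen (W n),
      forall n f, E f -> P n f = mul_ind (W n) f,
      W 0%N = set0,
      forall i j, (i <= j)%N -> W i `<=` W j
    & forall m n, (m <= n)%N -> F n (@ind_fun R K (W m)) = @ind_fun R K (W m)].
Proof.
case: hP => hband hmono hP0 hcomm.
have hex n : exists W, clopen W /\ forall f, E f -> P n f = mul_ind W f.
  by have [W ? ?] := hband n; exists W.
have [W hW] := choice hex.
have E1 := E_fone hE.
have PW1 n : P n (@fone R K) = @ind_fun R K (W n).
  by rewrite (hW n).2 //; apply/funext => x; rewrite mul_indE ind_funE; case: ifP.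
exists W; split => [n|n|||m n mn].
- by case: (hW n).
- by case: (hW n).
- apply/seteqP; split => // x Wx; have := congr1 (fun g => g x) (hP0 _ E1).
  by rewrite PW1 ind_funT // => -[] /eqP; rewrite oner_eq0.
- move=> i j ij x Wix; apply: contrapT => nWjx.
  have f01 : fle (@fzero R K) (@fone R K) by move=> y; rewrite lee_fin ler01.
  have := hmono i j ij _ E1 f01 x.
  by rewrite !PW1 ind_funT // ind_funF // lee_fin ler10.
- by rewrite -PW1 hcomm // (cond_exp_fone (filtration_cond_exp hF n)).
Qed.

Lemma stopping_time_first_time : exists2 tau, sup_completion E tau &
  [/\ nat_valued_time tau,
      (forall n : nat, (1 <= n)%N ->
         clopen [set x | tau x = n%:R%:E] /\
         (F n @` E) (@ind_fun R K [set x | tau x = n%:R%:E]))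
    & (forall (n : nat) f, E f -> P n f = mul_ind [set x | tau x <= n%:R%:E] f)].
Proof.
have [W [cW PW W0 Wmono FW]] := stopping_time_sets.
have tau_le n : [set x | @first_time R K W x <= n%:R%:E] = W n.
  by apply/seteqP; split => x /first_time_le; apply.
exists (first_time R W).
  split; first exact: continuous_first_time.
  exists (@fzero R K); first exact: E_fzero.
  move=> x; case: (nat_valued_first_time R W0 x) => [->|[m _ ->]].
    exact: leey.
  by rewrite lee_fin ler0n.
split => [|n n1|n f Ef]; first exact: nat_valued_first_time.
- have tau_eq : [set x | first_time R W x = n%:R%:E] = W n `\` W n.-1.
    by apply/seteqP; split => x /first_time_eq; apply.
  have cWn : clopen (W n `\` W n.-1).
    by rewrite setDE; exact: (clopenI (cW n) (clopenC (W n.-1) (cW n.-1))).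
  rewrite tau_eq; split => //; exists (@ind_fun R K (W n `\` W n.-1)).
    exact: E_ind_fun.
  apply: (cond_exp_fixed_lincomb hE (filtration_cond_exp hF n) (E_ind_fun hE (cW n))
    (E_ind_fun hE (cW n.-1)) (E_ind_fun hE cWn) (FW _ _ (leqnn n)) (FW _ _ (leq_pred n))).
  by apply: ind_fun_setD; apply: Wmono; exact: leq_pred.
- by rewrite tau_le PW.
Qed.

End StoppingTimeToTime.

Theorem mainTheorem12 (R : realType) (K : topologicalType)
  (E : set (K -> \bar R)) (F : nat -> (K -> \bar R) -> (K -> \bar R)) :
  stone_space K -> order_dense_ideal E -> filtration E F ->
  (forall P : nat -> (K -> \bar R) -> (K -> \bar R),
     stopping_time E F P ->
     exists2 tau, sup_completion E tau &
       [/\ nat_valued_time tau,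
           (forall n : nat, (1 <= n)%N ->
              clopen [set x | tau x = n%:R%:E] /\
              (F n @` E) (@ind_fun R K [set x | tau x = n%:R%:E]))
         & (forall (n : nat) f, E f ->
              P n f = mul_ind [set x | tau x <= n%:R%:E] f)])
  /\
  (forall tau : K -> \bar R,
     sup_completion E tau -> nat_valued_time tau ->
     (forall n : nat, (1 <= n)%N ->
        (F n @` E) (@ind_fun R K [set x | tau x = n%:R%:E])) ->
     stopping_time E F
       (fun n f => if n is 0%N then @fzero R K
                   else mul_ind [set x | tau x <= n%:R%:E] f)).
Proof.
(* K need not be extremally disconnected: all the sets involved are clopen by construction. *)
move=> _ hE hF; split=> [P hP | tau tau_sup tau_nat tau_adapted].
- exact: stopping_time_first_time.
- exact: stopping_time_of_time.
Qed.
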